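(* Let $(R,\mathfrak{m})$ satisfy condition $\bigstar$. Then $\bar{T}(R)+pR=\{t+x: t\in\bar{T}(R),\ x\in pR\}$ is a subring of $R$ with the same residue field as $R$. More generally, for any ideal $I$ of $R$ containing $\mathfrak{m}^2+pR$, the set $\bar{T}(R)+I$ is a subring of $R$ with the same residue field as $R$.
   Context: All rings are commutative and unital. Condition $\bigstar$ on a ring $(R,\mathfrak{m})$: $R$ is a local ring (unique maximal ideal $\mathfrak{m}$, not necessarily Noetherian) of characteristic $p^N$ for a prime $p$ and some $N\ge 1$, with finite residue field $R/\mathfrak{m}\cong\mathbb{F}_q$, and $\mathfrak{m}$ is a nilpotent ideal. $T(R)$ is the unique subgroup of $R^\times$ mapping isomorphically onto $\mathbb{F}_q^\times$ under reduction mod $\mathfrak{m}$, and $\bar{T}(R)=T(R)\cup\{0\}$. A subring $S$ is local with $\mathfrak{m}_S=\mathfrak{m}\cap S$ and its residue field is naturally a subfield of $R/\mathfrak{m}$. *)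

From HB Require Import structures.
From mathcomp Require Import all_boot all_order all_algebra.
Set Implicit Arguments. Unset Strict Implicit. Unset Printing Implicit Defensive.
Import GRing.Theory.
Local Open Scope ring_scope.

Section Defs.
Variable R : comUnitRingType.

Definition is_ideal (I : R -> Prop) : Prop :=
  [/\ I 0, (forall x y, I x -> I y -> I (x + y)) & (forall r x, I x -> I (r * x))].

Definition is_local_with (m : R -> Prop) : Prop :=
  [/\ is_ideal m, ~ m 1 & forall x, ~ m x -> x \is a GRing.unit].

Definition has_char_pN (p N : nat) : Prop :=
  [/\ prime p, (0 < N)%N & forall n : nat, (n%:R : R) = 0 <-> (p ^ N %| n)%N].

Definition finite_residue (m : R -> Prop) : Prop :=
  exists s : seq R, forall x, exists2 y, y \in s & m (x - y).

(* m is nilpotent: m^n = 0 for some n, i.e. every product of n elements of m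
   vanishes (m^n is generated by such products). *)
Definition nilpotent_ideal (m : R -> Prop) : Prop :=
  exists n : nat, forall s : seq R, size s = n -> (forall x, x \in s -> m x) ->
    \prod_(x <- s) x = 0.

Definition condition_star (m : R -> Prop) (p N : nat) : Prop :=
  [/\ is_local_with m, has_char_pN p N, finite_residue m & nilpotent_ideal m].

(* T is a subgroup of R^x mapping isomorphically (under reduction mod m)
   onto (R/m)^x:  the nonzero residue classes are exactly those not in m. *)
Definition is_teichmuller (m : R -> Prop) (T : R -> Prop) : Prop :=
  [/\ (forall t, T t -> t \is a GRing.unit), T 1,
      (forall s t, T s -> T t -> T (s * t)),
      (forall t, T t -> T t^-1)
    & forall x, ~ m x -> exists! t, T t /\ m (x - t)].

Definition Tbar (T : R -> Prop) (x : R) : Prop := T x \/ x = 0.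

Definition set_add (A I : R -> Prop) (x : R) : Prop :=
  exists a y, [/\ A a, I y & x = a + y].

Definition pR (p : nat) (x : R) : Prop := exists r, x = p%:R * r.

(* I contains m^2 + pR (for I an ideal, this is containment of the ideal
   m^2 + pR generated by the products ab, a,b in m, and the multiples of p). *)
Definition contains_msq_pR (m : R -> Prop) (p : nat) (I : R -> Prop) : Prop :=
  (forall a b, m a -> m b -> I (a * b)) /\ (forall x, pR p x -> I x).

Definition is_subring (S : R -> Prop) : Prop :=
  [/\ S 0, S 1, (forall x y, S x -> S y -> S (x - y))
    & (forall x y, S x -> S y -> S (x * y))].

(* The residue field S/(m cap S) of S, viewed inside R/m, is all of R/m. *)
Definition same_residue_field (m : R -> Prop) (S : R -> Prop) : Prop :=
  forall x, exists y, S y /\ m (x - y).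

End Defs.

(* Teichmuller lifts are fixed by a high power z |-> z ^+ p ^ n of Frobenius
   (T is finite and Frobenius is injective on it), and choosing p ^ n beyond the
   nilpotency index of m makes the same power kill m.  Since (x + y) ^+ p ^ n is
   congruent to x ^+ p ^ n + y ^+ p ^ n modulo any ideal J containing p, lifting
   a - b to u in T u {0} modulo m and raising to the power p ^ n shows
   a - b = u modulo J.  Hence T u {0} + J is closed under subtraction; closure
   under products is clear, and T already meets every residue class. *)

From HB Require Import structures.
From mathcomp Require Import all_boot all_order all_algebra.
From mathcomp Require Import ring.
From Stdlib Require Import Classical ClassicalEpsilon.
Set Implicit Arguments. Unset Strict Implicit. Unset Printing Implicit Defensive.
Import GRing.Theory.
Local Open Scope ring_scope.

Lemma pR_ideal (R : comUnitRingType) p : is_ideal (@pR R p).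
Proof.
split; first by exists 0; rewrite mulr0.
- by move=> _ _ [r ->] [s ->]; exists (r + s); rewrite mulrDr.
- by move=> r _ [s ->]; exists (r * s); rewrite mulrCA.
Qed.

Lemma pR_exprD_sub (R : comUnitRingType) p (x y : R) : prime p ->
  pR p ((x + y) ^+ p - x ^+ p - y ^+ p).
Proof.
case: p => [//|p] p_pr; have [pR0 pRD _] := pR_ideal R p.+1.
rewrite exprDn big_ord_recl big_ord_recr /= subn0 subnn bin0 binn !expr0.
set S := \sum_(i < p) _.
have -> : x ^+ p.+1 * 1 *+ 1 + (S + 1 * y ^+ p.+1 *+ 1) - x ^+ p.+1 - y ^+ p.+1 = S
  by ring.
apply: big_ind => // i _.
have /dvdnP [k ->] : (p.+1 %| 'C(p.+1, bump 0 i))%N.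
  by apply: prime_dvd_bin; rewrite // /bump /= add1n ltnS ltn_ord.
by exists (x ^+ (p.+1 - bump 0 i) * y ^+ bump 0 i *+ k); rewrite mulrnA mulr_natl mulrnAC.
Qed.

Section Ideal.
Variables (R : comUnitRingType) (J : R -> Prop).
Hypothesis idealJ : is_ideal J.

Lemma ideal0 : J 0.
Proof. by case: idealJ. Qed.

Lemma idealD x y : J x -> J y -> J (x + y).
Proof. by case: idealJ => _ + _; apply. Qed.

Lemma idealMl r x : J x -> J (r * x).
Proof. by case: idealJ => _ _; apply. Qed.

Lemma idealN x : J x -> J (- x).
Proof. by move=> Jx; rewrite -mulN1r; apply: idealMl. Qed.

Lemma idealB x y : J x -> J y -> J (x - y).
Proof. by move=> Jx Jy; apply: idealD => //; apply: idealN. Qed.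

Lemma ideal_expr x k : J x -> (0 < k)%N -> J (x ^+ k).
Proof. by move=> Jx; case: k => // k _; rewrite exprSr; apply: idealMl. Qed.

Variable p : nat.
Hypothesis p_pr : prime p.
Hypothesis pR_sub : forall x, pR p x -> J x.

Lemma ideal_exprD_pow (x y : R) n :
  J ((x + y) ^+ (p ^ n) - x ^+ (p ^ n) - y ^+ (p ^ n)).
Proof.
elim: n => [|n IHn].
  by rewrite expn0 !expr1 [x + y]addrC addrK subrr; exact: ideal0.
rewrite expnSr !exprM.
move: IHn; set A := (x + y) ^+ _; set X := x ^+ _; set Y := y ^+ _.
set j := A - X - Y => Jj.
have -> : A = (X + Y) + j by rewrite /j; ring.
have J1 := pR_sub (pR_exprD_sub (X + Y) j p_pr).
have J2 := pR_sub (pR_exprD_sub X Y p_pr).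
have J3 := ideal_expr Jj (prime_gt0 p_pr).
have -> : (X + Y + j) ^+ p - X ^+ p - Y ^+ p =
  ((X + Y + j) ^+ p - (X + Y) ^+ p - j ^+ p) + j ^+ p +
  ((X + Y) ^+ p - X ^+ p - Y ^+ p) by ring.
by apply: idealD => //; apply: idealD.
Qed.

End Ideal.

Section Local.
Variables (R : comUnitRingType) (m : R -> Prop).
Hypothesis localm : is_local_with m.

Lemma local_ideal : is_ideal m.
Proof. by case: localm. Qed.

Lemma local_unit_notin u : u \is a GRing.unit -> ~ m u.
Proof.
case: localm => idealm m1 _ u_unit mu; apply: m1.
by rewrite -(mulVr u_unit); apply: idealMl.
Qed.

Lemma local_exprn_in x k : m (x ^+ k) -> m x.
Proof.
move=> mxk; apply: NNPP => mx; apply: (local_unit_notin _ mxk).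
by rewrite unitrX //; case: localm => _ _; apply.
Qed.

Lemma local_char_pR_sub p N x : has_char_pN R p N -> pR p x -> m x.
Proof.
move=> [_ _ charR] [r ->]; rewrite mulrC; apply: (idealMl local_ideal).
apply: (@local_exprn_in _ N); rewrite -natrX.
by have /charR -> := dvdnn (p ^ N); apply: (ideal0 local_ideal).
Qed.

End Local.

Lemma nilpotent_ideal_expr (R : comUnitRingType) (m : R -> Prop) :
  nilpotent_ideal m -> exists n, forall x, m x -> x ^+ n = 0.
Proof.
case=> n nil_m; exists n => x mx.
rewrite -iter_mulr_1 -(big_nseq 1 *%R n x id) nil_m ?size_nseq //.
by move=> _ /nseqP [-> _].
Qed.

Section Teichmuller.
Variables (R : comUnitRingType) (m : R -> Prop) (T : R -> Prop).
Hypotheses (localm : is_local_with m) (teichT : is_teichmuller m T).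

Lemma teich_unit t : T t -> t \is a GRing.unit.
Proof. by case: teichT => + _ _ _ _; apply. Qed.

Lemma teich_exprn t k : T t -> T (t ^+ k).
Proof.
case: teichT => _ T1 TM _ _ Tt.
by elim: k => [|k IHk]; rewrite ?expr0 // exprS; apply: TM.
Qed.

Lemma teich_eq_mod a b : T a -> T b -> m (a - b) -> a = b.
Proof.
case: teichT => _ _ _ _ liftT Ta Tb mab.
have [t [_ t_uniq]] := liftT a (local_unit_notin localm (teich_unit Ta)).
have <- := t_uniq b (conj Tb mab); apply/esym/t_uniq; rewrite subrr.
by split=> //; apply: (ideal0 (local_ideal localm)).
Qed.

Lemma teich_uniq_size_le (s0 L : seq R) :
  (forall x, exists2 y, y \in s0 & m (x - y)) ->
  uniq L -> (forall t, t \in L -> T t) -> (size L <= size s0)%N.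
Proof.
move=> s0_res uL TL.
have /all_sig [res resP] : forall x, {y | y \in s0 /\ m (x - y)}.
  move=> x; apply: constructive_indefinite_description.
  by have [y] := s0_res x; exists y.
rewrite -(size_map res); apply: uniq_leq_size => [|_ /mapP [x _ ->]].
  rewrite map_inj_in_uniq // => x y xL yL res_xy.
  apply: teich_eq_mod (TL _ xL) (TL _ yL) _.
  have [_ mx] := resP x; have [_ my] := resP y.
  have -> : x - y = (x - res x) - (y - res y) by rewrite res_xy; ring.
  exact: (idealB (local_ideal localm) mx my).
by case: (resP x).
Qed.

Variables (p N : nat).
Hypothesis charR : has_char_pN R p N.

Lemma teich_frobenius_inj a b : T a -> T b -> a ^+ p = b ^+ p -> a = b.
Proof.
move=> Ta Tb ab_p; apply: teich_eq_mod Ta Tb _.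
have [p_pr _ _] := charR.
apply: (@local_exprn_in _ _ localm _ p).
have -> : (a - b) ^+ p = - ((a - b + b) ^+ p - (a - b) ^+ p - b ^+ p).
  by rewrite subrK ab_p; ring.
exact/(idealN (local_ideal localm))/(local_char_pR_sub localm charR)/pR_exprD_sub.
Qed.

Lemma teich_frobenius_pow_inj k a b :
  T a -> T b -> a ^+ (p ^ k) = b ^+ (p ^ k) -> a = b.
Proof.
elim: k a b => [|k IHk] a b Ta Tb; first by rewrite expn0 !expr1.
rewrite expnSr !exprM => ab_pk; apply: IHk => //.
exact: teich_frobenius_inj (teich_exprn _ Ta) (teich_exprn _ Tb) ab_pk.
Qed.

(* Pigeonhole: the orbit [t, t^p, t^(p^2), ...] lies in [T], which injects into [s0]. *)
Lemma teich_frobenius_period (s0 : seq R) t :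
  (forall x, exists2 y, y \in s0 & m (x - y)) -> T t ->
  exists2 d, (0 < d <= size s0)%N & t ^+ (p ^ d) = t.
Proof.
move=> s0_res Tt; pose L := [seq t ^+ (p ^ k) | k <- iota 0 (size s0).+1].
have /(uniqPn 0) [i [j [lt_ij ltj t_ij]]] : ~~ uniq L.
  apply/negP => uL; suff : (size L <= size s0)%N by rewrite size_map size_iota ltnn.
  by apply: (teich_uniq_size_le s0_res uL) => _ /mapP [k _ ->]; apply: teich_exprn.
rewrite size_map size_iota ltnS in ltj.
rewrite !(nth_map 0%N) ?size_iota ?(ltn_trans lt_ij) // !nth_iota
  ?(ltn_trans lt_ij) // !add0n in t_ij.
exists (j - i)%N; first by rewrite subn_gt0 lt_ij (leq_trans (leq_subr _ _)).
apply: (@teich_frobenius_pow_inj i) => //; first exact: teich_exprn.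
by rewrite -exprM -expnD subnK ?(ltnW lt_ij).
Qed.

Lemma teich_frobenius_fixed n0 : finite_residue m ->
  exists2 n, (n0 <= p ^ n)%N & forall t, T t -> t ^+ (p ^ n) = t.
Proof.
case=> s0 s0_res; have [p_pr _ _] := charR.
exists ((size s0)`! * n0.+1)%N => [|t Tt].
  rewrite ltnW // (leq_trans (ltn_expl _ (prime_gt1 p_pr))) //.
  by rewrite leq_exp2l ?prime_gt1 // (leq_trans (leqnSn n0)) ?leq_pmull ?fact_gt0.
have [d /dvdn_fact /dvdnP [c ->] t_d] := teich_frobenius_period s0_res Tt.
rewrite mulnAC mulnC; elim: (c * n0.+1)%N => [|k IHk].
  by rewrite muln0 expn0 expr1.
by rewrite mulnS expnD exprM t_d.
Qed.

End Teichmuller.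

Section TeichmullerPlusIdeal.
Variables (R : comUnitRingType) (m : R -> Prop) (p N : nat) (T J : R -> Prop).
Hypotheses (starR : condition_star m p N) (teichT : is_teichmuller m T).
Hypotheses (idealJ : is_ideal J) (pR_sub : forall x, pR p x -> J x).

Lemma tbar_mul a b : Tbar T a -> Tbar T b -> Tbar T (a * b).
Proof.
case: teichT => _ _ TM _ _ [Ta|->] [Tb|->]; rewrite ?mul0r ?mulr0;
  by [left; apply: TM | right].
Qed.

Lemma tbar_lift x : exists2 u, Tbar T u & m (x - u).
Proof.
case: (classic (m x)) => [mx|not_mx]; first by exists 0; [right | rewrite subr0].
by case: teichT => _ _ _ _ /(_ x not_mx) [u [[Tu mu] _]]; exists u; first left.
Qed.

Lemma tbar_subB_mod a b : Tbar T a -> Tbar T b -> exists2 u, Tbar T u & J (a - b - u).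
Proof.
move=> Ta Tb; have [localm charR resR nilm] := starR; have [p_pr _ _] := charR.
have [n0 nil_n0] := nilpotent_ideal_expr nilm.
have [n le_n0 fixT] := teich_frobenius_fixed localm teichT charR n0 resR.
have fixTbar z : Tbar T z -> z ^+ (p ^ n) = z.
  by case=> [/fixT | ->] //; rewrite expr0n expn_eq0 eqn0Ngt prime_gt0.
have [u Tu mu] := tbar_lift (a - b); exists u => //.
have kill : (a - b - u) ^+ (p ^ n) = 0 by rewrite -(subnK le_n0) exprD nil_n0 ?mulr0.
have J1 := ideal_exprD_pow idealJ p_pr pR_sub u (a - b - u) n.
have J2 := ideal_exprD_pow idealJ p_pr pR_sub a (- b) n.
have J3 := ideal_exprD_pow idealJ p_pr pR_sub b (- b) n.
rewrite [u + _]addrC subrK kill (fixTbar u Tu) subr0 in J1.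
rewrite (fixTbar a Ta) in J2.
rewrite subrr (fixTbar b Tb) expr0n expn_eq0 eqn0Ngt prime_gt0 //= sub0r in J3.
move: J1 J2 J3; set A := (a - b) ^+ _; set C := (- b) ^+ _ => J1 J2 J3.
have -> : a - b - u = (A - u) - (A - a - C) + (- b - C) by ring.
exact: (idealD idealJ (idealB idealJ J1 J2) J3).
Qed.

Lemma tbar_add_ideal_subring : is_subring (set_add (Tbar T) J).
Proof.
have J0 := ideal0 idealJ; split.
- by exists 0, 0; split; [right | | rewrite addr0].
- by exists 1, 0; split; [left; case: teichT | | rewrite addr0].
- move=> _ _ [a [x [Ta Jx ->]]] [b [y [Tb Jy ->]]].
  have [u Tu Ju] := tbar_subB_mod Ta Tb.
  exists u, (a - b - u + (x - y)); split=> //; last by ring.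
  exact: (idealD idealJ Ju (idealB idealJ Jx Jy)).
- move=> _ _ [a [x [Ta Jx ->]]] [b [y [Tb Jy ->]]].
  exists (a * b), (a * y + x * (b + y)); split; first exact: tbar_mul.
    by apply: (idealD idealJ); rewrite ?[x * _]mulrC; apply: (idealMl idealJ).
  by ring.
Qed.

Lemma tbar_add_ideal_residue : same_residue_field m (set_add (Tbar T) J).
Proof.
move=> x; have [u Tu mu] := tbar_lift x; exists u; split=> //.
by exists u, 0; split; [| exact: (ideal0 idealJ) | rewrite addr0].
Qed.

End TeichmullerPlusIdeal.

Theorem corollary26 (R : comUnitRingType) (m : R -> Prop) (p N : nat)
    (T : R -> Prop) :
  condition_star m p N -> is_teichmuller m T ->
  (is_subring (set_add (Tbar T) (pR p)) /\
   same_residue_field m (set_add (Tbar T) (pR p))) /\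
  (forall I : R -> Prop, is_ideal I -> contains_msq_pR m p I ->
     is_subring (set_add (Tbar T) I) /\
     same_residue_field m (set_add (Tbar T) I)).
Proof.
move=> starR teichT.
have tbar_add J : is_ideal J -> (forall x, pR p x -> J x) ->
    is_subring (set_add (Tbar T) J) /\ same_residue_field m (set_add (Tbar T) J).
  move=> idealJ pR_sub; split; first exact: (tbar_add_ideal_subring starR teichT idealJ pR_sub).
  exact: tbar_add_ideal_residue.
split; first by apply: tbar_add => //; apply: pR_ideal.
by move=> I idealI [_ pR_sub]; apply: tbar_add.
Qed.
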